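(* Let $\rho$ be a qubit state and write $p_{00}=\langle 0|\rho|0\rangle$, $p_{01}=\langle 0|\rho|1\rangle$ in the eigenbasis $\{|0\rangle,|1\rangle\}$ of $L=|1\rangle\langle 1|$. Let $L_{AB}=L\otimes\mathbb{I}+\mathbb{I}\otimes L$ on two qubits $A,B$. Define $$\Delta M_A^{(1)}:=\max_{V_{AB}} M^{(1)}(\sigma_A)-M^{(1)}(\rho),\qquad \sigma_A=\mathrm{tr}_B\big[V_{AB}(\rho\otimes\rho)V_{AB}^\dagger\big],$$ where the maximum is over all unitaries $V_{AB}$ with $[V_{AB},L_{AB}]=0$. Then $$\Delta M_A^{(1)}=|p_{01}|\Big(\sqrt{1+(2p_{00}-1)^2}-1\Big),$$ and this maximum is achieved by the unitary that acts as the identity on $|00\rangle$ and $|11\rangle$ and, on the degenerate subspace spanned by $\{|01\rangle,|10\rangle\}$, acts as the rotation $|01\rangle\mapsto\cos\theta|01\rangle+\sin\theta|10\rangle$, $|10\rangle\mapsto-\sin\theta|01\rangle+\cos\theta|10\rangle$ with $\cos\theta=1/\sqrt{1+(2p_{00}-1)^2}$ and $\sin\theta=(2p_{00}-1)/\sqrt{1+(2p_{00}-1)^2}$ (i.e. $\theta=\cos^{-1}\big(1/\sqrt{1+(2p_{00}-1)^2}\big)$ up to this sign convention).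
   Context: For a qubit with $L=|1\rangle\langle1|$, the first mode of an operator $\rho$ is $\rho^{(1)}=|1\rangle\langle1|\rho|0\rangle\langle0|$, and the coherence measure is $M^{(1)}(\rho):=\|\rho^{(1)}\|_1$ (trace norm), so that $M^{(1)}(\rho)=|p_{01}|$. Unitaries commuting with $L_{AB}$ are called allowed unitaries. *)

From HB Require Import structures.
From mathcomp Require Import all_boot all_order all_algebra.
From mathcomp Require Import complex.
Set Implicit Arguments. Unset Strict Implicit. Unset Printing Implicit Defensive.
Import Order.TTheory GRing.Theory Num.Theory.
Local Open Scope ring_scope.

(* Two-qubit operators are 4x4 matrices, the
   basis vector |a b> (a = qubit A, b = qubit B) having index 2*a+b. *)

Section Defs.
Variable R : rcfType.
Local Notation C := R[i].

Definition qA (i : 'I_4) : 'I_2 := inord (i %/ 2).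
Definition qB (i : 'I_4) : 'I_2 := inord (i %% 2).
Definition ket2 (a b : 'I_2) : 'I_4 := inord (2 * a + b).

Definition kron (A B : 'M[C]_2) : 'M[C]_4 :=
  \matrix_(i, j) (A (qA i) (qA j) * B (qB i) (qB j)).

Definition ptraceB (X : 'M[C]_4) : 'M[C]_2 :=
  \matrix_(a, a') \sum_(b < 2) X (ket2 a b) (ket2 a' b).

Definition adj n m (X : 'M[C]_(n, m)) : 'M[C]_(m, n) := (map_mx Num.conj X)^T.

Definition is_state (rho : 'M[C]_2) : Prop :=
  adj rho = rho /\ \tr rho = 1 /\
  forall v : 'cV[C]_2, 0 <= (adj v *m rho *m v) 0 0.

Definition unitary n (V : 'M[C]_n) : Prop := V *m adj V = 1%:M /\ adj V *m V = 1%:M.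

Definition Lq : 'M[C]_2 := delta_mx 1 1.
Definition LAB : 'M[C]_4 := kron Lq 1%:M + kron 1%:M Lq.

Definition allowed (V : 'M[C]_4) : Prop := unitary V /\ V *m LAB = LAB *m V.

(* M^(1)(X) = || |1><1| X |0><0| ||_1 ; the operator |1><1| X |0><0| has the
   single (possibly) nonzero entry X 1 0, so its trace norm is |X 1 0|. *)
Definition M1 (X : 'M[C]_2) : C := `| X 1 0 |.

Definition sigmaA (V : 'M[C]_4) (rho : 'M[C]_2) : 'M[C]_2 :=
  ptraceB (V *m kron rho rho *m adj V).

(* identity on |00>,|11>; rotation on span{|01>,|10>}:
   |01> -> c|01> + s|10>,  |10> -> -s|01> + c|10>  (columns = images) *)
Definition Vrot (c s : C) : 'M[C]_4 :=
  \matrix_(i, j)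
    if (i == ket2 0 0) && (j == ket2 0 0) then 1
    else if (i == ket2 1 1) && (j == ket2 1 1) then 1
    else if (i == ket2 0 1) && (j == ket2 0 1) then c
    else if (i == ket2 1 0) && (j == ket2 0 1) then s
    else if (i == ket2 0 1) && (j == ket2 1 0) then - s
    else if (i == ket2 1 0) && (j == ket2 1 0) then c
    else 0.
End Defs.

From HB Require Import structures.
From mathcomp Require Import all_boot all_order all_algebra.
From mathcomp Require Import complex.
From mathcomp Require Import ring.
Import Order.TTheory GRing.Theory Num.Theory.
Set Implicit Arguments. Unset Strict Implicit. Unset Printing Implicit Defensive.
Local Open Scope ring_scope.

(* An allowed unitary commutes with the diagonal matrix L_AB, whose eigenvalue
   on |ab> is the excitation number a + b; hence it is a phase e0 on |00>, a
   phase e3 on |11> and a 2x2 unitary U on span{|01>,|10>}.  Expanding the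
   partial trace,
     sigma_10 = p10 (p00 (U_10 + U_11) conj(e0) + p11 e3 conj(U_00 + U_01)),
   so |sigma_10| <= |p01| (p00 x + p11 y) with x = |U_10 + U_11| and
   y = |U_00 + U_01|, and x^2 + y^2 = 2 because the columns of U are
   orthonormal.  Cauchy-Schwarz bounds p00 x + p11 y by
   sqrt (2 (p00^2 + p11^2)) = sqrt (1 + (2 p00 - 1)^2), with equality when
   (x, y) is proportional to (p00, p11), which the rotation by theta achieves. *)

Lemma sqr_add_mul_le_mul_sqr (F : numDomainType) (p q x y : F) :
  p \is Num.real -> q \is Num.real -> x \is Num.real -> y \is Num.real ->
  (p * x + q * y) ^+ 2 <= (p ^+ 2 + q ^+ 2) * (x ^+ 2 + y ^+ 2).
Proof.
move=> pR qR xR yR; rewrite -subr_ge0.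
have -> : (p ^+ 2 + q ^+ 2) * (x ^+ 2 + y ^+ 2) - (p * x + q * y) ^+ 2
          = (p * y - q * x) ^+ 2 by ring.
by rewrite -realEsqr rpredB ?rpredM.
Qed.

Lemma convex_comb_le_sqrtC (C : numClosedFieldType) (p q x y : C) :
  0 <= p -> 0 <= q -> p + q = 1 -> 0 <= x -> 0 <= y -> x ^+ 2 + y ^+ 2 = 2 ->
  p * x + q * y <= sqrtC (1 + (2 * p - 1) ^+ 2).
Proof.
move=> p0 q0 pq1 x0 y0 xy2.
have lhs0 : 0 <= p * x + q * y by rewrite addr_ge0 ?mulr_ge0.
rewrite -(sqrCK lhs0) ler_sqrtC ?nnegrE ?exprn_ge0 //; last first.
  by rewrite addr_ge0 // -realEsqr rpredB ?rpredM ?ger0_real.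
apply: le_trans (sqr_add_mul_le_mul_sqr _ _ _ _) _; rewrite ?ger0_real //.
have -> : q = 1 - p by rewrite -pq1 addrC addKr.
suff -> : (p ^+ 2 + (1 - p) ^+ 2) * (x ^+ 2 + y ^+ 2) = 1 + (2 * p - 1) ^+ 2 by [].
by rewrite xy2; ring.
Qed.

Lemma comm_diag_mx_eq0 (F : idomainType) n (d : 'rV[F]_n) (A : 'M[F]_n) i j :
  A *m diag_mx d = diag_mx d *m A -> d 0 i != d 0 j -> A i j = 0.
Proof.
move/matrixP/(_ i j); rewrite mul_mx_diag mul_diag_mx !mxE => /eqP.
rewrite mulrC -subr_eq0 -mulrBl mulf_eq0 subr_eq0 eq_sym.
by case/orP=> [->|/eqP].
Qed.

Section TwoQubits.
Variable R : rcfType.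
Local Notation C := R[i].
Implicit Types (rho : 'M[C]_2) (V : 'M[C]_4).

Lemma sum_ord2 (F : 'I_2 -> C) : \sum_(i < 2) F i = F 0 + F 1.
Proof. by rewrite !big_ord_recl big_ord0 addr0; congr (_ + F _); exact: val_inj. Qed.

Lemma sum_ord4 (F : 'I_4 -> C) : \sum_(i < 4) F i = F 0 + F 1 + F 2 + F 3.
Proof.
by rewrite !big_ord_recl big_ord0 addr0 !addrA; congr (_ + F _ + F _ + F _); exact: val_inj.
Qed.

Lemma ord4_cases (i : 'I_4) : [\/ i = 0, i = 1, i = 2 | i = 3].
Proof.
case: i => [[|[|[|[|k]]]] lt_i4] //;
  [constructor 1 | constructor 2 | constructor 3 | constructor 4]; exact: val_inj.
Qed.

Lemma qA0 : qA 0 = 0. Proof. by apply: val_inj; rewrite /= inordK. Qed.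
Lemma qA1 : qA 1 = 0. Proof. by apply: val_inj; rewrite /= inordK. Qed.
Lemma qA2 : qA 2 = 1. Proof. by apply: val_inj; rewrite /= inordK. Qed.
Lemma qA3 : qA 3 = 1. Proof. by apply: val_inj; rewrite /= inordK. Qed.
Lemma qB0 : qB 0 = 0. Proof. by apply: val_inj; rewrite /= inordK. Qed.
Lemma qB1 : qB 1 = 1. Proof. by apply: val_inj; rewrite /= inordK. Qed.
Lemma qB2 : qB 2 = 0. Proof. by apply: val_inj; rewrite /= inordK. Qed.
Lemma qB3 : qB 3 = 1. Proof. by apply: val_inj; rewrite /= inordK. Qed.
Lemma ket2_00 : ket2 0 0 = 0. Proof. by apply: val_inj; rewrite /= inordK. Qed.
Lemma ket2_01 : ket2 0 1 = 1. Proof. by apply: val_inj; rewrite /= inordK. Qed.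
Lemma ket2_10 : ket2 1 0 = 2. Proof. by apply: val_inj; rewrite /= inordK. Qed.
Lemma ket2_11 : ket2 1 1 = 3. Proof. by apply: val_inj; rewrite /= inordK. Qed.

Definition indexE :=
  (qA0, qA1, qA2, qA3, qB0, qB1, qB2, qB3, ket2_00, ket2_01, ket2_10, ket2_11).

Definition excitations (i : 'I_4) : nat := i %/ 2 + i %% 2.

Lemma LAB_diag : LAB R = diag_mx (\row_i (excitations i)%:R).
Proof.
apply/matrixP => i j; rewrite /LAB /kron /Lq !mxE.
case: (ord4_cases i) => ->; case: (ord4_cases j) => ->; rewrite ?indexE /=.
all: rewrite ?mulr1n ?mulr0n ?mulr1 ?mulr0 ?mul1r ?mul0r ?addr0 ?add0r //.
Qed.

Lemma commLAB_entry_eq0 V i j : V *m LAB R = LAB R *m V ->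
  excitations i != excitations j -> V i j = 0.
Proof.
rewrite LAB_diag => VL nij; apply: (comm_diag_mx_eq0 VL).
by rewrite !mxE eqr_nat.
Qed.

Lemma commLAB_zeros V : V *m LAB R = LAB R *m V ->
  [/\ V 0 1 = 0, V 0 2 = 0, V 0 3 = 0, V 1 0 = 0 & V 1 3 = 0] /\
  [/\ V 2 0 = 0, V 2 3 = 0, V 3 0 = 0, V 3 1 = 0 & V 3 2 = 0].
Proof. by move=> VL; do 2!split; exact: (commLAB_entry_eq0 VL). Qed.

Lemma sigmaA10 V rho : V *m LAB R = LAB R *m V ->
  sigmaA V rho 1 0 = rho 1 0 * (rho 0 0 * (V 2 1 + V 2 2) * (V 0 0)^*
                                + rho 1 1 * V 3 3 * (V 1 1 + V 1 2)^*).
Proof.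
move=> /commLAB_zeros[[z01 z02 z03 z10 z13] [z20 z23 z30 z31 z32]].
rewrite /sigmaA /ptraceB /adj /kron !(mxE, sum_ord2, sum_ord4) ?indexE.
rewrite z01 z02 z03 z10 z13 z20 z23 z30 z31 z32 !rmorph0 rmorphD.
ring.
Qed.

Lemma allowed_block_norms V : allowed V ->
  [/\ `|V 0 0| = 1, `|V 3 3| = 1
    & `|V 2 1 + V 2 2| ^+ 2 + `|V 1 1 + V 1 2| ^+ 2 = 2].
Proof.
case=> [[/matrixP VVadj /matrixP adjVV] VL].
have [[z01 z02 z03 z10 z13] [z20 z23 z30 z31 z32]] := commLAB_zeros VL.
move: (VVadj 0 0) (VVadj 3 3) (adjVV 1 1) (adjVV 2 2) (adjVV 1 2).
rewrite /adj !(mxE, sum_ord4) /= ?z01 ?z02 ?z03 ?z10 ?z13 ?z20 ?z23 ?z30 ?z31 ?z32 !rmorph0.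
rewrite !(mulr0, mul0r, addr0, add0r) => n00 n33 c11 c22 c12.
have norm1 (a : C) : a * a^* = 1 -> `|a| = 1.
  by move=> aa; apply/eqP; rewrite -sqrp_eq1 // normCK aa.
split; [exact: norm1 | exact: norm1 |].
have c21 : V 1 1 * (V 1 2)^* + V 2 1 * (V 2 2)^* = 0.
  by have := congr1 Num.conj c12; rewrite !rmorphD !rmorphM /= !conjCK rmorph0.
rewrite !normCK !rmorphD.
transitivity ((V 1 1)^* * V 1 1 + (V 2 1)^* * V 2 1 + ((V 1 2)^* * V 1 2 + (V 2 2)^* * V 2 2)
  + ((V 1 1)^* * V 1 2 + (V 2 1)^* * V 2 2) + (V 1 1 * (V 1 2)^* + V 2 1 * (V 2 2)^*)).
  by ring.
by rewrite c11 c22 c12 c21 !addr0.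
Qed.

Lemma VrotE (c s : C) :
  [/\ Vrot c s 0 0 = 1, Vrot c s 3 3 = 1, Vrot c s 1 1 = c, Vrot c s 1 2 = - s
    & Vrot c s 2 1 = s /\ Vrot c s 2 2 = c].
Proof. by rewrite /Vrot !mxE ?indexE. Qed.

Lemma Vrot_allowed (c s : C) : c \is Num.real -> s \is Num.real ->
  c ^+ 2 + s ^+ 2 = 1 -> allowed (Vrot c s).
Proof.
move=> /CrealP cR /CrealP sR cs1.
have nsR : (- s)^* = - s by rewrite rmorphN /= sR.
split; first split.
all: apply/matrixP => i j; rewrite ?LAB_diag ?mul_mx_diag ?mul_diag_mx /adj.
all: rewrite !(mxE, sum_ord4) ?indexE.
all: case: (ord4_cases i) => ->; case: (ord4_cases j) => -> /=.
all: rewrite ?nsR ?cR ?sR ?rmorph0 ?rmorph1 ?mulr1n ?mulr0n.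
all: rewrite ?(mulr0, mul0r, mulr1, mul1r, addr0, add0r) //.
all: first [ring | rewrite -cs1; ring].
Qed.

Lemma adj_delta_mx m n (i : 'I_m) (j : 'I_n) :
  adj (delta_mx i j : 'M[C]_(m, n)) = delta_mx j i.
Proof. by apply/matrixP => a b; rewrite !mxE conjC_nat andbC. Qed.

Section QubitState.
Variable rho : 'M[C]_2.
Hypothesis rho_state : is_state rho.

Lemma state_conj10 : rho 1 0 = (rho 0 1)^*.
Proof. by case: rho_state => /matrixP/(_ 1 0) <- _; rewrite !mxE. Qed.

Lemma state_diag_ge0 k : 0 <= rho k k.
Proof.
case: rho_state => _ [_ /(_ (delta_mx k 0))].
by rewrite adj_delta_mx -rowE -colE !mxE.
Qed.

Lemma state_diag_sum : rho 0 0 + rho 1 1 = 1.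
Proof. by case: rho_state => _ [<- _]; rewrite /mxtrace sum_ord2. Qed.

Lemma M1_state : M1 rho = `|rho 0 1|.
Proof. by rewrite /M1 state_conj10 norm_conjC. Qed.

Local Notation p := (rho 0 0).
Local Notation r := (sqrtC (1 + (2 * rho 0 0 - 1) ^+ 2)).

Lemma M1_sigmaA_le V : allowed V -> M1 (sigmaA V rho) <= `|rho 0 1| * r.
Proof.
move=> VA; have [V00 V33 sum_sqr] := allowed_block_norms VA.
rewrite /M1 sigmaA10; last by case: VA.
rewrite normrM state_conj10 norm_conjC ler_wpM2l //.
apply: le_trans (ler_normD _ _) _.
rewrite !normrM !norm_conjC V00 V33 !mulr1.
rewrite (ger0_norm (state_diag_ge0 0)) (ger0_norm (state_diag_ge0 1)).
by apply: convex_comb_le_sqrtC; rewrite ?state_diag_ge0 ?state_diag_sum ?normr_ge0.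
Qed.

Lemma bias_real : 2 * p - 1 \is Num.real.
Proof. by rewrite rpredB ?rpredM ?rpred1 ?rpred_nat ?ger0_real ?state_diag_ge0. Qed.

Lemma one_add_bias_sqr_gt0 : 0 < 1 + (2 * p - 1) ^+ 2.
Proof. by rewrite (lt_le_trans ltr01) // lerDl -realEsqr bias_real. Qed.

Lemma r_gt0 : 0 < r.
Proof. by rewrite sqrtC_gt0 one_add_bias_sqr_gt0. Qed.

Lemma Vrot_opt_allowed : allowed (Vrot (1 / r) ((2 * p - 1) / r)).
Proof.
have rR : r \is Num.real := gtr0_real r_gt0.
apply: Vrot_allowed; rewrite ?rpredM ?rpredV ?rpred1 ?bias_real //.
by rewrite !expr_div_n -mulrDl expr1n sqrtCK divff // gt_eqF ?one_add_bias_sqr_gt0.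
Qed.

Lemma M1_sigmaA_Vrot_opt :
  M1 (sigmaA (Vrot (1 / r) ((2 * p - 1) / r)) rho) = `|rho 0 1| * r.
Proof.
have [_ VL] := Vrot_opt_allowed.
have rR : r \is Num.real := gtr0_real r_gt0.
have r_neq0 : r != 0 by rewrite gt_eqF ?r_gt0.
have q_eq : rho 1 1 = 1 - p by rewrite -state_diag_sum addrC addKr.
rewrite /M1 sigmaA10 //.
have [-> -> -> -> [-> ->]] := VrotE (1 / r) ((2 * p - 1) / r).
rewrite rmorph1 (CrealP _) ?rpredD ?rpredN ?rpredM ?rpredV ?rpred1 ?bias_real //.
have -> : p * ((2 * p - 1) / r + 1 / r) * 1 + rho 1 1 * 1 * (1 / r + - ((2 * p - 1) / r)) = r.
  transitivity (r ^+ 2 / r); last by rewrite expr2 mulfK.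
  by rewrite sqrtCK q_eq; field.
by rewrite normrM state_conj10 norm_conjC ger0_norm // ltW ?r_gt0.
Qed.

End QubitState.
End TwoQubits.

Theorem mainTheorem2 (R : rcfType) (rho : 'M[R[i]]_2) :
  is_state rho ->
  let p00 := rho 0 0 in
  let p01 := rho 0 1 in
  let r := sqrtC (1 + (2 * p00 - 1) ^+ 2) in
  let DM := `|p01| * (r - 1) in
  (forall V : 'M[R[i]]_4, allowed V -> M1 (sigmaA V rho) - M1 rho <= DM) /\
  allowed (Vrot (1 / r) ((2 * p00 - 1) / r)) /\
  M1 (sigmaA (Vrot (1 / r) ((2 * p00 - 1) / r)) rho) - M1 rho = DM.
Proof.
move=> rho_state p00 p01 r DM.
rewrite /DM mulrBr mulr1 M1_state //.
split; [|split].
- by move=> V VA; rewrite lerD2r; exact: M1_sigmaA_le.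
- exact: Vrot_opt_allowed.
- by rewrite M1_sigmaA_Vrot_opt.
Qed.
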